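(* For $\tau\in(0,\tfrac1{3\sqrt3})$ and all $t\in\mathbb{R}$, $2\tau=y_\tau(t)\sqrt{1-y_\tau(t)}\,\cos\big(\psi_1(t)+2\psi_2(t)\big)$; moreover $\psi_1(t)+2\psi_2(t)\in(-\tfrac\pi2,\tfrac\pi2)$ for all $t$, and $\psi_1(p_\tau)+2\psi_2(p_\tau)=0$.
   Context: $y_\tau$ solves $\ddot y=-2y(3y-2)$, $y(0)=y_{\max}$, $\dot y(0)=0$, where $y_{\max}$ is the largest root of $y^3-y^2+4\tau^2$; it satisfies $\dot y^2=-4(y^3-y^2+4\tau^2)$, is even, and is periodic of period $2p_\tau$, attaining its minimum at $t=p_\tau$. $\psi_1,\psi_2$ solve $(1-y_\tau)\dot\psi_1=2\tau$, $y_\tau\dot\psi_2=-2\tau$, $\psi_1(0)=\psi_2(0)=0$. *)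

From Stdlib Require Import Reals.
From Coquelicot Require Import Coquelicot.
Open Scope R_scope.

(* The cubic whose largest root is y_max. *)
Definition cubic (tau y : R) : R := y ^ 3 - y ^ 2 + 4 * tau ^ 2.

Definition is_y_tau (tau : R) (y dy : R -> R) : Prop :=
  (forall t, is_derive y t (dy t)) /\
  (forall t, is_derive dy t (-2 * y t * (3 * y t - 2))) /\
  cubic tau (y 0) = 0 /\
  (forall z, cubic tau z = 0 -> z <= y 0) /\
  dy 0 = 0.

Definition is_period (y : R -> R) (q : R) : Prop := forall t, y (t + q) = y t.

Definition is_half_period (y : R -> R) (p : R) : Prop :=
  0 < p /\ is_period y (2 * p) /\
  (forall q, 0 < q < 2 * p -> ~ is_period y q) /\
  (forall t, y p <= y t).

Definition is_psi1 (tau : R) (y psi1 : R -> R) : Prop :=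
  (forall t, exists d, is_derive psi1 t d /\ (1 - y t) * d = 2 * tau) /\
  psi1 0 = 0.

Definition is_psi2 (tau : R) (y psi2 : R -> R) : Prop :=
  (forall t, exists d, is_derive psi2 t d /\ y t * d = - 2 * tau) /\
  psi2 0 = 0.

(* The energy [dy^2 + 4 cubic tau y] is conserved and vanishes at t = 0, so
   [dy^2 = -4 cubic tau y]; with the equations for [psi1], [psi2] this shows
   that [psi1 + 2 psi2 + atan (dy / (4 tau))] has zero derivative, hence the
   phase equals [- atan (dy / (4 tau))].  Since [1 + (dy / (4 tau))^2 =
   y^2 (1 - y) / (4 tau^2)], the cosine identity follows once [0 < y < 1]:
   [y] never vanishes (by the [psi2] equation) and starts at the largest root
   [y 0 >= 2/3], and then the energy gives [1 - y > 0].  At the minimum [p]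
   of [y] we have [dy p = 0], so the phase vanishes there. *)
From Stdlib Require Import Reals Lra Psatz.
From Coquelicot Require Import Coquelicot.
Open Scope R_scope.

Lemma is_derive_zero_const (f : R -> R) :
  (forall t, is_derive f t 0) -> forall t, f t = f 0.
Proof.
  intros Hf t.
  destruct (Rtotal_order t 0) as [Hlt | [-> | Hgt]]; [| reflexivity |].
  - apply (eq_is_derive f t 0); [intros; apply Hf | exact Hlt].
  - symmetry; apply (eq_is_derive f 0 t); [intros; apply Hf | exact Hgt].
Qed.

Lemma is_derive_eq (f : R -> R) x l l' :
  is_derive f x l -> l = l' -> is_derive f x l'.
Proof. now intros H ->. Qed.

Lemma continuity_of_is_derive (f df : R -> R) :
  (forall t, is_derive f t (df t)) -> continuity f.
Proof.
  intros Hf x; apply continuity_pt_filterlim.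
  apply (ex_derive_continuous f x); exists (df x); apply Hf.
Qed.

Lemma is_derive_minimum (f df : R -> R) (p : R) :
  (forall t, is_derive f t (df t)) -> (forall t, f p <= f t) -> df p = 0.
Proof.
  intros Hf Hmin.
  assert (pr : derivable_pt f p) by (exists (df p); apply is_derive_Reals, Hf).
  rewrite <- (deriv_minimum f (p - 1) (p + 1) p pr); [| lra | lra | intros; apply Hmin].
  symmetry; apply derive_pt_eq_0, is_derive_Reals, Hf.
Qed.

Lemma continuity_pos_of_neq0 (f : R -> R) :
  continuity f -> (forall t, f t <> 0) -> 0 < f 0 -> forall t, 0 < f t.
Proof.
  intros Hc Hne H0 t.
  destruct (Rlt_le_dec 0 (f t)) as [Ht | Ht]; [exact Ht | exfalso].
  assert (Hneg : f t < 0) by (destruct Ht as [Ht | Ht]; [exact Ht | now destruct (Hne t)]).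
  destruct (Rtotal_order t 0) as [Hlt | [-> | Hgt]]; [| lra |].
  - destruct (IVT f t 0 Hc Hlt Hneg H0) as [z [_ Hz]]; exact (Hne z Hz).
  - destruct (IVT (fun u => - f u) 0 t (continuity_opp _ Hc) Hgt) as [z [_ Hz]]; [lra | lra |].
    apply (Hne z); lra.
Qed.

Lemma cos_atan_eq (u c : R) : 0 < c -> 1 + u ^ 2 = c ^ 2 -> cos (atan u) = / c.
Proof.
  intros Hc Hu.
  rewrite cos_atan, Rsqr_pow2, Hu, sqrt_pow2 by lra; field; lra.
Qed.

(* For [27 tau^2 < 1] the cubic is [<= 0] at [2/3] and [> 0] at [1]. *)
Lemma cubic_root_ge_two_thirds (tau : R) :
  0 < tau < 1 / (3 * sqrt 3) -> exists z, 2 / 3 <= z <= 1 /\ cubic tau z = 0.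
Proof.
  intros [Htau Htau_lt].
  assert (Hs : sqrt 3 * sqrt 3 = 3) by (apply sqrt_sqrt; lra).
  assert (Hs0 : 0 < sqrt 3) by (apply sqrt_lt_R0; lra).
  assert (Hprod : tau * (3 * sqrt 3) < 1).
  { apply Rmult_lt_reg_r with (/ (3 * sqrt 3)); [apply Rinv_0_lt_compat; nra |].
    rewrite Rmult_assoc, Rinv_r by nra; lra. }
  assert (Hsmall : 27 * tau ^ 2 < 1) by nra.
  destruct (IVT (cubic tau) (2 / 3) 1) as [z [Hz Hroot]]; unfold cubic in *; try nra.
  - apply (continuity_of_is_derive _ (fun u => 3 * u ^ 2 - 2 * u)).
    intros t; auto_derive; [exact I | ring].
  - exists z; split; [lra | exact Hroot].
Qed.

Section Trajectory.

Variables (tau : R) (y dy psi1 psi2 : R -> R).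
Hypothesis Htau : 0 < tau.
Hypothesis Hy : forall t, is_derive y t (dy t).
Hypothesis Hdy : forall t, is_derive dy t (-2 * y t * (3 * y t - 2)).
Hypothesis Hdy0 : dy 0 = 0.
Hypothesis Hcubic0 : cubic tau (y 0) = 0.
Hypothesis Hpsi1 : is_psi1 tau y psi1.
Hypothesis Hpsi2 : is_psi2 tau y psi2.

Lemma energy_identity : forall t, dy t ^ 2 = - 4 * cubic tau (y t).
Proof.
  assert (Hconst := is_derive_zero_const (fun t => dy t ^ 2 + 4 * cubic tau (y t))).
  intros t; enough (dy t ^ 2 + 4 * cubic tau (y t) = 0) by lra.
  rewrite Hconst, Hdy0, Hcubic0; [ring |].
  intros s; eapply is_derive_eq.
  - apply (@is_derive_plus R_AbsRing R_NormedModule (fun t => dy t ^ 2)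
             (fun t => 4 * cubic tau (y t))).
    + apply is_derive_pow, Hdy.
    + apply is_derive_scal, (is_derive_comp (cubic tau) y); [| apply Hy].
      unfold cubic; auto_derive; [exact I | reflexivity].
  - unfold plus, scal; simpl; unfold mult; simpl; ring.
Qed.

Lemma y_neq0 (t : R) : y t <> 0.
Proof. intros Hz; destruct (proj1 Hpsi2 t) as [d [_ Hd]]; rewrite Hz in Hd; lra. Qed.

Lemma y_neq1 (t : R) : 1 - y t <> 0.
Proof. intros Hz; destruct (proj1 Hpsi1 t) as [d [_ Hd]]; rewrite Hz in Hd; lra. Qed.

Lemma phase_eq_atan (t : R) : psi1 t + 2 * psi2 t = - atan (dy t / (4 * tau)).
Proof.
  assert (Hconst := is_derive_zero_const
                      (fun t => psi1 t + 2 * psi2 t + atan (dy t / (4 * tau)))).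
  enough (psi1 t + 2 * psi2 t + atan (dy t / (4 * tau)) = 0) by lra.
  rewrite Hconst, (proj2 Hpsi1), (proj2 Hpsi2), Hdy0.
  { unfold Rdiv; rewrite Rmult_0_l, atan_0; ring. }
  intros s.
  destruct (proj1 Hpsi1 s) as [d1 [Hd1 Ed1]], (proj1 Hpsi2 s) as [d2 [Hd2 Ed2]].
  assert (D1 : d1 = 2 * tau / (1 - y s)).
  { apply (Rmult_eq_reg_l (1 - y s)); [rewrite Ed1; field |]; apply y_neq1. }
  assert (D2 : d2 = - 2 * tau / y s).
  { apply (Rmult_eq_reg_l (y s)); [rewrite Ed2; field |]; apply y_neq0. }
  assert (Hsq : 1 + dy s / (4 * tau) * (dy s / (4 * tau) * 1)
                = y s ^ 2 * (1 - y s) / (4 * tau ^ 2)).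
  { replace (y s ^ 2 * (1 - y s)) with ((dy s ^ 2 + 16 * tau ^ 2) / 4)
      by (rewrite energy_identity; unfold cubic; field).
    field; lra. }
  eapply is_derive_eq.
  - apply (@is_derive_plus R_AbsRing R_NormedModule (fun t => psi1 t + 2 * psi2 t)
             (fun t => atan (dy t / (4 * tau)))).
    + apply (@is_derive_plus R_AbsRing R_NormedModule psi1 (fun t => 2 * psi2 t));
        [exact Hd1 | apply is_derive_scal, Hd2].
    + apply (is_derive_comp atan (fun t => dy t / (4 * tau))).
      * apply is_derive_Reals, derivable_pt_lim_atan.
      * apply (is_derive_ext (fun t => / (4 * tau) * dy t)); [intros u; apply Rmult_comm |].
        apply is_derive_scal, Hdy.
  - unfold plus, scal; simpl; unfold mult; simpl.
    rewrite Hsq, D1, D2; field.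
    repeat split; try lra; first [apply y_neq0 | apply y_neq1].
Qed.

Lemma phase_bound (t : R) : - (PI / 2) < psi1 t + 2 * psi2 t < PI / 2.
Proof. rewrite phase_eq_atan; destruct (atan_bound (dy t / (4 * tau))); lra. Qed.

Lemma phase_eq0_at_critical (p : R) : dy p = 0 -> psi1 p + 2 * psi2 p = 0.
Proof. intros Hp; rewrite phase_eq_atan, Hp; unfold Rdiv; rewrite Rmult_0_l, atan_0; ring. Qed.

Hypothesis Hy0_pos : 0 < y 0.

Lemma y_pos : forall t, 0 < y t.
Proof. exact (continuity_pos_of_neq0 y (continuity_of_is_derive y dy Hy) y_neq0 Hy0_pos). Qed.

Lemma one_sub_y_pos (t : R) : 0 < 1 - y t.
Proof.
  assert (Hyt := y_pos t); assert (Hen := energy_identity t); unfold cubic in Hen.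
  assert (0 < y t ^ 2 * (1 - y t)) by nra.
  nra.
Qed.

Lemma phase_cos_identity (t : R) :
  2 * tau = y t * sqrt (1 - y t) * cos (psi1 t + 2 * psi2 t).
Proof.
  assert (Hyt := y_pos t); assert (H1y := one_sub_y_pos t).
  assert (Hr : sqrt (1 - y t) ^ 2 = 1 - y t) by (apply pow2_sqrt; lra).
  assert (Hr0 : 0 < sqrt (1 - y t)) by (apply sqrt_lt_R0; lra).
  rewrite phase_eq_atan, cos_neg,
    (cos_atan_eq _ (y t * sqrt (1 - y t) / (2 * tau))).
  - field; lra.
  - apply Rdiv_lt_0_compat; nra.
  - assert (Hen := energy_identity t); unfold cubic in Hen.
    field_simplify_eq; [rewrite Hr |]; nra.
Qed.

End Trajectory.

Theorem mainTheorem7 (tau : R) (y dy psi1 psi2 : R -> R) (p : R) :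
  0 < tau < 1 / (3 * sqrt 3) ->
  is_y_tau tau y dy ->
  is_half_period y p ->
  is_psi1 tau y psi1 ->
  is_psi2 tau y psi2 ->
  (forall t : R,
     2 * tau = y t * sqrt (1 - y t) * cos (psi1 t + 2 * psi2 t)) /\
  (forall t : R,
     - (PI / 2) < psi1 t + 2 * psi2 t < PI / 2) /\
  psi1 p + 2 * psi2 p = 0.
Proof.
  intros Htau [Hy [Hdy [Hcubic0 [Hmax Hdy0]]]] [_ [_ [_ Hmin]]] Hpsi1 Hpsi2.
  assert (Hy0_pos : 0 < y 0).
  { destruct (cubic_root_ge_two_thirds tau Htau) as [z [Hz Hroot]].
    specialize (Hmax z Hroot); lra. }
  assert (Htau_pos : 0 < tau) by lra.
  split; [| split].
  - intros t; eapply phase_cos_identity; eassumption.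
  - intros t; eapply phase_bound; eassumption.
  - eapply phase_eq0_at_critical; try eassumption.
    exact (is_derive_minimum y dy p Hy Hmin).
Qed.
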